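(* Let $K$ be a number field, let $X\subseteq M_d(K)$ be closed in the linear Zariski topology, and let $\mathcal S=\langle X\rangle$. Let $A\in\mathcal S$ be completely pseudo-regular and $B\in[A]_{\mathcal S}$. (1) There exist completely pseudo-regular $C,D\in[A]_{\mathcal S}$ such that $B=E(D)B$ and $B=BE(C)$. (2) Suppose $B=B_1B_2$ with $B_1,B_2\in\mathcal S$. Then there exists a completely pseudo-regular element $C\in[A]_{\mathcal S}$ such that $B_1B_2=B_1E(C)B_2$.
   Context: The linear Zariski topology on $M_d(K)$ has as closed sets the finite unions of vector subspaces; $\langle X\rangle$ is the subsemigroup of $M_d(K)$ generated by $X$. A matrix $C$ is completely pseudo-regular if it lies in a subgroup of the multiplicative semigroup $M_d(K)$ (equivalently $\operatorname{im} C\cap\ker C=0$); then $E(C)$ denotes the unique idempotent matrix with $\operatorname{im}E(C)=\operatorname{im}C$ and $\ker E(C)=\ker C$ (the identity of any subgroup containing $C$). For $P,Q\in M_d(K)$ write $P\parallel Q$ if $\operatorname{im}P=\operatorname{im}Q$ and $\ker P=\ker Q$. For $P,Q\in\mathcal S$, write $P\sim_{\mathcal S}Q$ if there exist $C,D,C',D'\in\mathcal S\cup\{I\}$ with $Q\parallel DPC$ and $P\parallel D'QC'$; this is an equivalence relation on $\mathcal S$, and $[P]_{\mathcal S}$ denotes the class of $P$. *)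

From HB Require Import structures.
From mathcomp Require Import all_boot all_order all_algebra all_field.
From Stdlib Require Import ClassicalEpsilon.
Set Implicit Arguments. Unset Strict Implicit. Unset Printing Implicit Defensive.
Import GRing.Theory.
Local Open Scope ring_scope.

(* A number field is modelled as a finite-dimensional field extension of Q:
   K : fieldExtType rat. Matrices act on row vectors (mathcomp convention):
   im P = row space of P, ker P = kermx P (left kernel). *)

Section Defs.
Variables (K : fieldExtType rat) (d : nat).
Local Notation M := 'M[K]_d.

Definition lin_zariski_closed (X : M -> Prop) : Prop :=
  exists Vs : seq {vspace M}, forall P, X P <-> exists2 V, V \in Vs & P \in V.

Inductive gen_sg (X : M -> Prop) : M -> Prop :=
| gen_sg_base P : X P -> gen_sg X P
| gen_sg_mul P Q : gen_sg X P -> gen_sg X Q -> gen_sg X (P *m Q).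

Definition is_subgroup (G : M -> Prop) : Prop :=
  exists e, [/\ G e,
    (forall x y, G x -> G y -> G (x *m y)),
    (forall x, G x -> e *m x = x /\ x *m e = x) &
    (forall x, G x -> exists y, [/\ G y, x *m y = e & y *m x = e])].

Definition compl_pseudo_regular (C : M) : Prop :=
  exists G, is_subgroup G /\ G C.

Definition par (P Q : M) : Prop :=
  (P == Q)%MS /\ (kermx P == kermx Q)%MS.

Definition idem_spec (C E : M) : Prop := E *m E = E /\ par E C.

Definition Eof (C : M) : M := epsilon (inhabits (0 : M)) (idem_spec C).

Definition in_S1 (X : M -> Prop) (P : M) : Prop := gen_sg X P \/ P = 1%:M.

Definition sim_S (X : M -> Prop) (P Q : M) : Prop :=
  exists C D C' D', [/\ in_S1 X C, in_S1 X D, in_S1 X C' & in_S1 X D'] /\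
    par Q (D *m P *m C) /\ par P (D' *m Q *m C').

Definition in_class (X : M -> Prop) (P Q : M) : Prop :=
  gen_sg X Q /\ sim_S X P Q.

End Defs.

(* A matrix C lies in a subgroup of M_d(K) iff im C ∩ ker C = 0, and then the
   matrices parallel to E(C) form such a subgroup.  Let B ∥ D A C and
   A ∥ D' B C', and B = B1 B2.  With S := D' B1 and T := B2 C' we get S T ∥ A,
   and the sandwich C := T A S lies in the semigroup, has im C ∩ ker C = 0
   (since A (S T) A (S T) ∥ A) and satisfies S C T = (S T) A (S T) ∥ A, so
   C ∼ A.  As im E(C) ⊆ im B1 and ker E(C) = ker C, the rows of B1 - B1 E(C)
   are killed by T A; since B C' has the rank of both A and B, right
   multiplication by C' A is injective on im B, hence (B1 - B1 E(C)) B2 = 0.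
   Part (1) is the case of the factorisations B = B I and B = I B. *)

From HB Require Import structures.
From mathcomp Require Import all_boot all_order all_algebra all_field.
From Stdlib Require Import ClassicalEpsilon.
Set Implicit Arguments. Unset Strict Implicit. Unset Printing Implicit Defensive.
Import GRing.Theory.
Local Open Scope ring_scope.

Section ImKer.
Variables (F : fieldType) (n : nat).
Implicit Types P : 'M[F]_n.

Lemma capmx_ker0_eq0 P m (u : 'M[F]_(m, n)) :
  (P :&: kermx P)%MS = 0 -> (u <= P)%MS -> u *m P = 0 -> u = 0.
Proof.
move=> PK0 uP /sub_kermxP uK.
by apply/eqP; rewrite -submx0 -PK0 sub_capmx uP uK.
Qed.

Lemma capmx_ker0P P :
  reflect (forall z : 'M[F]_n, z *m P *m P = 0 -> z *m P = 0)
          ((P :&: kermx P)%MS == 0).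
Proof.
apply: (iffP eqP) => [PK0 z zPP | kerPP].
  exact: capmx_ker0_eq0 PK0 (submxMl z P) zPP.
have [m defY] := submxP (capmxSl P (kermx P)).
have /sub_kermxP YP := capmxSr P (kermx P).
by rewrite defY kerPP // -defY.
Qed.

Lemma capmx_ker0_idem P :
  (P :&: kermx P)%MS = 0 ->
  exists E, [/\ E *m E = E, (E == P)%MS & (kermx E == kermx P)%MS].
Proof.
move=> PK0; pose E := proj_mx P (kermx P); exists E.
have EE : E *m E = E by apply: proj_mx_proj.
have PE : P *m E = P by apply: proj_mx_id.
have full : (1%:M <= P + kermx P)%MS.
  apply: submx_full; rewrite /row_full mxrank_disjoint_sum // mxrank_ker.
  by rewrite subnKC // rank_leq_row.
split => //; apply/andP; split.
- by rewrite -[E]mul1mx proj_mx_sub.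
- by rewrite -{1}PE submxMl.
- have := proj_mx_compl_sub (submx_trans (submx1 (kermx E)) full).
  by rewrite mulmx_ker subr0.
- by apply/sub_kermxP; apply: proj_mx_0.
Qed.

End ImKer.

Section Parallel.
Variables (K : fieldExtType rat) (d : nat).
Local Notation M := 'M[K]_d.
Implicit Types A P Q E : M.

Lemma par_refl P : par P P.
Proof. by split; apply/andP. Qed.

Lemma par_sym P Q : par P Q -> par Q P.
Proof. by case=> /andP[PQ QP] /andP[kPQ kQP]; split; apply/andP. Qed.

Lemma par_mulmx_eq0 P Q m (z : 'M[K]_(m, d)) :
  par P Q -> z *m P = 0 -> z *m Q = 0.
Proof.
case=> _ /andP[kPQ _] /sub_kermxP zP.
by apply/sub_kermxP; apply: submx_trans kPQ.
Qed.

Lemma par_of_ker P Q : (P <= Q)%MS -> (kermx P == kermx Q)%MS -> par P Q.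
Proof.
move=> PQ kPQ; split => //; rewrite -(mxrank_leqif_eq PQ).
have := eqmx_rank kPQ; rewrite !mxrank_ker => /(congr1 (subn d)).
by rewrite !subKn ?rank_leq_row // => ->.
Qed.

Lemma par_mul A P Q : (A :&: kermx A)%MS = 0 ->
  par P A -> par Q A -> par (P *m Q) A.
Proof.
move=> AK0 PA QA; apply: par_of_ker.
  by apply: submx_trans (submxMl P Q) _; case: QA => /andP[].
apply/andP; split; apply/sub_kermxP; last first.
  by rewrite mulmxA (par_mulmx_eq0 (par_sym PA) (mulmx_ker A)) mul0mx.
have /(par_mulmx_eq0 QA) zPA : kermx (P *m Q) *m P *m Q = 0.
  by rewrite -mulmxA mulmx_ker.
apply: (par_mulmx_eq0 PA); apply: (capmx_ker0_eq0 AK0 _ zPA).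
by apply: submx_trans (submxMl _ P) _; case: PA => /andP[].
Qed.

Lemma idem_capmx_ker0 E : E *m E = E -> (E :&: kermx E)%MS = 0.
Proof.
by move=> EE; apply/eqP/capmx_ker0P => z; rewrite -mulmxA EE.
Qed.

Lemma idem_par_mulmx E P : E *m E = E -> par P E -> P *m E = P /\ E *m P = P.
Proof.
move=> EE PE; split.
  by case: PE => /andP[/submxP[m ->] _] _; rewrite -mulmxA EE.
have /(par_mulmx_eq0 (par_sym PE)) : (1%:M - E) *m E = 0.
  by rewrite mulmxBl mul1mx EE subrr.
by rewrite mulmxBl mul1mx => /eqP; rewrite subr_eq0 => /eqP <-.
Qed.

Lemma idem_par_unitmx E Q : E *m E = E -> par Q E -> Q + (1%:M - E) \in unitmx.
Proof.
move=> EE QE; have [QEQ _] := idem_par_mulmx EE QE.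
rewrite -row_free_unit -kermx_eq0; apply/eqP.
set x := kermx _; have xZ : x *m (Q + (1%:M - E)) = 0 by apply: mulmx_ker.
have xQ : x *m Q = 0.
  have := congr1 (mulmx^~ E) xZ.
  by rewrite mul0mx -mulmxA mulmxDl QEQ mulmxBl mul1mx EE subrr addr0.
have xE := par_mulmx_eq0 QE xQ.
by move: xZ; rewrite mulmxDr xQ add0r mulmxBr mulmx1 xE subr0.
Qed.

Lemma idem_par_cpr E P : E *m E = E -> par P E -> compl_pseudo_regular P.
Proof.
(* The inverse of Q in the group of matrices parallel to E is E Z^-1, where
   Z := Q + (1 - E) commutes with E. *)
move=> EE PE; exists (fun Q => par Q E); split=> //; exists E; split.
- exact: par_refl.
- by move=> Q R; apply: par_mul (idem_capmx_ker0 EE).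
- by move=> Q /(idem_par_mulmx EE)[].
move=> Q QE; have Zu := idem_par_unitmx EE QE; set Z := Q + _ in Zu.
have [QEQ EQQ] := idem_par_mulmx EE QE.
have ZE : Z *m E = Q by rewrite mulmxDl QEQ mulmxBl mul1mx EE subrr addr0.
have EZ : E *m Z = Q by rewrite mulmxDr EQQ mulmxBr mulmx1 EE subrr addr0.
have EZV : E *m invmx Z = invmx Z *m E.
  rewrite -[E *m _](mulKmx Zu); congr (_ *m _).
  by rewrite mulmxA ZE -EZ (mulmxK Zu).
have QR : Q *m (E *m invmx Z) = E by rewrite EZV -EZ mulmxA (mulmxK Zu) EE.
have RQ : E *m invmx Z *m Q = E by rewrite -ZE mulmxA (mulmxKV Zu) EE.
exists (E *m invmx Z); split=> //; apply: par_of_ker; first by rewrite EZV submxMl.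
apply/andP; split; apply/sub_kermxP.
  by rewrite -{2}RQ mulmxA mulmx_ker mul0mx.
by rewrite mulmxA mulmx_ker mul0mx.
Qed.

Lemma Eof_spec P : (P :&: kermx P)%MS = 0 -> idem_spec P (Eof P).
Proof. by move=> /capmx_ker0_idem[E [EE EP kEP]]; apply: epsilon_spec; exists E. Qed.

Lemma compl_pseudo_regularP P :
  compl_pseudo_regular P <-> (P :&: kermx P)%MS = 0.
Proof.
split=> [[G [[e [_ _ Gid Ginv]] GP]] | /Eof_spec[EE pE]].
  apply/eqP/capmx_ker0P => z zPP.
  have [_ Pe] := Gid P GP; have [y [_ Py _]] := Ginv P GP.
  by rewrite -Pe -Py !mulmxA zPP mul0mx.
exact: idem_par_cpr EE (par_sym pE).
Qed.

End Parallel.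

Section Semigroup.
Variables (K : fieldExtType rat) (d : nat) (X : 'M[K]_d -> Prop).
Implicit Types P Q : 'M[K]_d.

Lemma in_S1M P Q : in_S1 X P -> in_S1 X Q -> in_S1 X (P *m Q).
Proof.
case=> [XP|->]; case=> [XQ|->]; rewrite ?mul1mx ?mulmx1; try by left.
- by left; apply: gen_sg_mul.
- by right.
Qed.

Lemma gen_sg_mulS1l P Q : in_S1 X P -> gen_sg X Q -> gen_sg X (P *m Q).
Proof. by case=> [XP|->] XQ; [apply: gen_sg_mul | rewrite mul1mx]. Qed.

Lemma gen_sg_mulS1r P Q : gen_sg X P -> in_S1 X Q -> gen_sg X (P *m Q).
Proof. by move=> XP [XQ|->]; [apply: gen_sg_mul | rewrite mulmx1]. Qed.

End Semigroup.

Section Sandwich.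
Variables (K : fieldExtType rat) (d : nat) (A S T : 'M[K]_d).
Hypotheses (AK0 : (A :&: kermx A)%MS = 0) (STA : par (S *m T) A).

Lemma sandwich_ker m (u : 'M[K]_(m, d)) :
  u *m (T *m A *m S) = 0 -> u *m T *m A = 0.
Proof.
move=> /(congr1 (mulmx^~ T)); rewrite mul0mx !mulmxA => uTAST.
apply: (par_mulmx_eq0 (par_mul AK0 (par_refl A) STA)).
by rewrite !mulmxA.
Qed.

Lemma sandwich_capmx_ker0 : (T *m A *m S :&: kermx (T *m A *m S))%MS = 0.
Proof.
have AWA : par (A *m (S *m T) *m A) A.
  exact: par_mul AK0 (par_mul AK0 (par_refl A) STA) (par_refl A).
apply/eqP/capmx_ker0P => z /sandwich_ker zTAW.
have /(par_mulmx_eq0 AWA) : z *m T *m (A *m (S *m T) *m A) = 0.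
  by move: zTAW; rewrite !mulmxA.
by rewrite !mulmxA => ->; rewrite mul0mx.
Qed.

Lemma sandwich_par : par A (S *m (T *m A *m S) *m T).
Proof.
have -> : S *m (T *m A *m S) *m T = S *m T *m A *m (S *m T) by rewrite !mulmxA.
exact: par_sym (par_mul AK0 (par_mul AK0 STA (par_refl A)) STA).
Qed.

End Sandwich.

Section Class.
Variables (K : fieldExtType rat) (d : nat) (X : 'M[K]_d -> Prop).
Variables (A B C D C' D' : 'M[K]_d).
Hypotheses (AK0 : (A :&: kermx A)%MS = 0)
  (BA : par B (D *m A *m C)) (AB : par A (D' *m B *m C')).

Lemma sim_mxrank : \rank (B *m C') = \rank A /\ \rank B = \rank A.
Proof.
have rBA : (\rank B <= \rank A)%N.
  case: BA => /eqmx_rank -> _.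
  exact: leq_trans (mxrankM_maxl _ _) (mxrankM_maxr _ _).
have rABC : (\rank A <= \rank (B *m C'))%N.
  by case: AB => /eqmx_rank -> _; rewrite -mulmxA mxrankM_maxr.
have rBCB := mxrankM_maxl B C'.
by split; apply/eqP; rewrite eqn_leq ?rBA ?rABC ?(leq_trans rBCB) ?(leq_trans rABC).
Qed.

Lemma sim_mulmxr_eq0 m (v : 'M[K]_(m, d)) :
  (v <= B)%MS -> v *m C' *m A = 0 -> v = 0.
Proof.
move=> /submxP[w ->] wBCA; have [rBCA rBA] := sim_mxrank.
have BCA : (B *m C' <= A)%MS.
  have ABC : (A <= B *m C')%MS.
    case: AB => /andP[AW _] _; apply: submx_trans AW _.
    by rewrite -mulmxA submxMl.
  by rewrite -(mxrank_leqif_sup ABC).2 rBCA.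
have wBC : w *m B *m C' = 0.
  apply: (capmx_ker0_eq0 AK0) wBCA.
  by rewrite -mulmxA; apply: submx_trans (submxMl _ _) BCA.
have kBC : (kermx (B *m C') <= kermx B)%MS.
  have kB : (kermx B <= kermx (B *m C'))%MS.
    by apply/sub_kermxP; rewrite mulmxA mulmx_ker mul0mx.
  by rewrite -(mxrank_leqif_sup kB).2 !mxrank_ker rBCA rBA.
by apply/sub_kermxP; apply: submx_trans kBC; apply/sub_kermxP; rewrite mulmxA.
Qed.

Hypotheses (XA : gen_sg X A) (XC' : in_S1 X C') (XD' : in_S1 X D').

Lemma class_idempotent_between B1 B2 :
  in_S1 X B1 -> in_S1 X B2 -> B1 *m B2 = B ->
  exists C0, [/\ compl_pseudo_regular C0, in_class X A C0 &
                 B1 *m B2 = B1 *m Eof C0 *m B2].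
Proof.
move=> XB1 XB2 defB; set S := D' *m B1; set T := B2 *m C'.
have STA : par (S *m T) A.
  have -> : S *m T = D' *m B *m C' by rewrite -defB !mulmxA.
  exact: par_sym AB.
have XS : in_S1 X S by apply: in_S1M.
have XT : in_S1 X T by apply: in_S1M.
pose C0 := T *m A *m S.
have C0K0 : (C0 :&: kermx C0)%MS = 0 := sandwich_capmx_ker0 AK0 STA.
have [EE FC0] := Eof_spec C0K0.
exists C0; split.
- exact/compl_pseudo_regularP.
- split; first exact: gen_sg_mulS1r (gen_sg_mulS1l XT XA) XS.
  exists S, T, T, S; split=> //.
  by split; [exact: par_refl | exact: sandwich_par AK0 STA].
set F := Eof C0 in EE FC0 *.
have [m defB1F] : exists m, B1 *m F = m *m B1.
  apply/submxP; apply: submx_trans (submxMl _ _) _.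
  case: FC0 => /andP[FC _] _; apply: submx_trans FC _.
  exact: submx_trans (submxMl _ S) (submxMl D' B1).
pose u := B1 - B1 *m F.
have uF : u *m F = 0 by rewrite mulmxBl -mulmxA EE subrr.
have uTA : u *m T *m A = 0 := sandwich_ker AK0 STA (par_mulmx_eq0 FC0 uF).
have uB : (u *m B2 <= B)%MS.
  by rewrite /u defB1F -{1}[B1]mul1mx -mulmxBl -mulmxA defB submxMl.
have /eqP : u *m B2 = 0.
  by apply: sim_mulmxr_eq0 uB _; rewrite -(mulmxA u B2 C').
by rewrite mulmxBl subr_eq0 => /eqP.
Qed.

End Class.

Theorem lemmaV11 (K : fieldExtType rat) (d : nat) (X : 'M[K]_d -> Prop)
    (A B : 'M[K]_d) :
  lin_zariski_closed X ->
  gen_sg X A -> compl_pseudo_regular A -> in_class X A B ->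
  (exists C D : 'M[K]_d,
     [/\ compl_pseudo_regular C, compl_pseudo_regular D,
         in_class X A C & in_class X A D] /\
     B = Eof D *m B /\ B = B *m Eof C) /\
  (forall B1 B2 : 'M[K]_d, gen_sg X B1 -> gen_sg X B2 -> B = B1 *m B2 ->
     exists C : 'M[K]_d,
       [/\ compl_pseudo_regular C, in_class X A C &
           B1 *m B2 = B1 *m Eof C *m B2]).
Proof.
move=> _ XA /compl_pseudo_regularP AK0 [XB [C [D [C' [D' [[_ _ XC' XD'] [BA AB]]]]]]].
have between := class_idempotent_between AK0 BA AB XA XC' XD'.
split=> [|B1 B2 XB1 XB2 defB]; last first.
  exact: between (or_introl XB1) (or_introl XB2) (esym defB).
have [C1 [cprC1 AC1 BEC1]] := between _ _ (or_introl XB) (or_intror erefl) (mulmx1 B).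
have [D1 [cprD1 AD1 EBD1]] := between _ _ (or_intror erefl) (or_introl XB) (mul1mx B).
rewrite !mulmx1 in BEC1; rewrite !mul1mx in EBD1.
by exists C1, D1.
Qed.
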